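(* Let $\mathrm{F}\colon \mathcal A \rightleftarrows \mathcal B\colon \mathrm{U}$ be an adjunction ($\mathrm F\dashv \mathrm U$, unit $\eta$, counit $\varepsilon$) and let $\mathbb T=(\mathrm{FU},\mathrm F\eta\mathrm U,\varepsilon)$ be the induced comonad on $\mathcal B$. Let $\mathbb C$ be a comonad on $\mathcal A$ and let $\mathbb S$ be a comonad on $\mathcal B$ which is a lift of $\mathbb C$ through $\mathrm F\dashv\mathrm U$, implemented by a natural isomorphism $\Omega\colon \mathrm{CU}\Rightarrow \mathrm{US}$ such that $(\mathrm U,\Omega)$ is a lax morphism of comonads from $\mathbb C$ to $\mathbb S$. Assume moreover: (a) $\mathrm V\colon \mathcal C\rightleftarrows \mathcal B\colon \mathrm G$ is an adjunction ($\mathrm V\dashv \mathrm G$, unit $\eta'$, counit $\varepsilon'$) whose induced comonad on $\mathcal B$ is $\mathbb S$, i.e. $\mathrm S=\mathrm{VG}$, $\Delta^{\mathbb S}=\mathrm V\eta'\mathrm G$, $\varepsilon^{\mathbb S}=\varepsilon'$; (b) $\mathbb Q$ is a comonad on $\mathcal C$ which is an extension of $\mathbb T$ through $\mathrm V\dashv\mathrm G$, i.e. there is a natural isomorphism $\tilde\Omega\colon \mathrm{QG}\Rightarrow \mathrm{GT}$ such that $(\mathrm G,\tilde\Omega)$ is a lax isomorphism of comonads from $\mathbb Q$ to $\mathbb T$; (c) the mate $\tilde\Lambda=\varepsilon'\mathrm{TV}\circ \mathrm V\tilde\Omega\mathrm V\circ \mathrm{VQ}\eta'\colon \mathrm{VQ}\Rightarrow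 \mathrm{TV}$ of $\tilde\Omega$ is a colax isomorphism of comonads from $\mathbb Q$ to $\mathbb T$ (i.e. $(\mathrm V,\tilde\Lambda)$ is a colax morphism of comonads and $\tilde\Lambda$ is invertible). Let $\psi=\tilde\Lambda\mathrm G\circ \mathrm V\tilde\Omega^{-1}\colon \mathrm{ST}=\mathrm{VGT}\Rightarrow \mathrm{TVG}=\mathrm{TS}$ be the induced distributive law of $\mathbb S$ over $\mathbb T$. Then: (1) $\psi$ is a natural isomorphism; and (2) for any category $\mathcal Z$ and functor $\mathrm N\colon\mathcal B\to\mathcal Z$, the left $\psi^{-1}$-coalgebra structures $\lambda$ on $\mathrm N$ (on $\mathcal Z$) are in bijective correspondence with the $\mathbb Q$-opcoalgebra structures on $\mathrm{NV}\colon \mathcal C\to\mathcal Z$.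
   Context: Juxtaposition denotes composition of functors and horizontal composition (whiskering) of natural transformations; $\circ$ denotes vertical composition. A comonad $\mathbb D=(\mathrm D,\Delta^{\mathbb D},\varepsilon^{\mathbb D})$ on a category is an endofunctor with coassociative, counital comultiplication $\Delta^{\mathbb D}\colon \mathrm D\Rightarrow\mathrm{DD}$ and counit $\varepsilon^{\mathbb D}\colon\mathrm D\Rightarrow\mathrm{id}$. For comonads $\mathbb C'$ on $\mathcal C'$ and $\mathbb D$ on $\mathcal D$: a lax morphism from $\mathbb C'$ to $\mathbb D$ is a pair $(\mathrm G,\sigma)$ with $\mathrm G\colon\mathcal D\to\mathcal C'$, $\sigma\colon \mathrm C'\mathrm G\Rightarrow \mathrm{GD}$ satisfying $\mathrm G\Delta^{\mathbb D}\circ\sigma=\sigma\mathrm D\circ \mathrm C'\sigma\circ\Delta^{\mathbb C'}\mathrm G$ and $\mathrm G\varepsilon^{\mathbb D}\circ\sigma=\varepsilon^{\mathbb C'}\mathrm G$; a colax morphism is a pair $(\mathrm F,\tau)$ with $\mathrm F\colon\mathcal C'\to\mathcal D$, $\tau\colon\mathrm F\mathrm C'\Rightarrow\mathrm{DF}$ satisfying $\Delta^{\mathbb D}\mathrm F\circ\tau=\mathrm D\tau\circ\tau\mathrm C'\circ \mathrm F\Delta^{\mathbb C'}$ and $\varepsilon^{\mathbb D}\mathrm F\circ\tau=\mathrm F\varepsilon^{\mathbb C'}$; it is a (co)lax isomorphism if the natural transformation is invertible. The mate of a natural transformation $\Omega\colon \mathrm{CU}\Rightarrow\mathrm{US}$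 under $\mathrm F\dashv\mathrm U$ is $\Lambda=\varepsilon\mathrm{SF}\circ\mathrm F\Omega\mathrm F\circ\mathrm{FC}\eta\colon\mathrm{FC}\Rightarrow\mathrm{SF}$. If $\chi\colon \mathrm{TS}\Rightarrow\mathrm{ST}$ is a natural transformation between comonads $\mathbb T,\mathbb S$ on $\mathcal B$, a left $\chi$-coalgebra on $\mathcal Z$ is a functor $\mathrm N\colon\mathcal B\to\mathcal Z$ with a natural transformation $\lambda\colon\mathrm{NS}\Rightarrow\mathrm{NT}$ such that $\mathrm N\Delta^{\mathbb T}\circ\lambda=\lambda\mathrm T\circ\mathrm N\chi\circ\lambda\mathrm S\circ\mathrm N\Delta^{\mathbb S}$ and $\mathrm N\varepsilon^{\mathbb T}\circ\lambda=\mathrm N\varepsilon^{\mathbb S}$; here this is applied with $\chi=\psi^{-1}\colon\mathrm{TS}\Rightarrow\mathrm{ST}$. A $\mathbb Q$-opcoalgebra structure on a functor $\mathrm P\colon\mathcal C\to\mathcal Z$ is a natural transformation $\nabla\colon\mathrm P\Rightarrow\mathrm{PQ}$ with $\mathrm P\Delta^{\mathbb Q}\circ\nabla=\nabla\mathrm Q\circ\nabla$ and $\mathrm P\varepsilon^{\mathbb Q}\circ\nabla=\mathrm{id}_{\mathrm P}$. *)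

Set Implicit Arguments.
Unset Strict Implicit.

Record Category := {
  Obj :> Type;
  Hom : Obj -> Obj -> Type;
  idm : forall a, Hom a a;
  comp : forall x y z, Hom y z -> Hom x y -> Hom x z;
  comp_id_l : forall a b (f : Hom a b), comp (idm b) f = f;
  comp_id_r : forall a b (f : Hom a b), comp f (idm a) = f;
  comp_assoc : forall a b c d (h : Hom c d) (g : Hom b c) (f : Hom a b),
      comp h (comp g f) = comp (comp h g) f }.

Arguments Hom {_} _ _.
Arguments idm {_} _.
Arguments comp {_ _ _ _} _ _.

Notation "g ∘ f" := (comp g f) (at level 40, left associativity).

Record Functor (A B : Category) := {
  fobj :> A -> B;
  fmap : forall a b : A, Hom a b -> Hom (fobj a) (fobj b);
  fmap_id : forall a, fmap (idm a) = idm (fobj a);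
  fmap_comp : forall (a b c : A) (g : Hom b c) (f : Hom a b),
      fmap (g ∘ f) = fmap g ∘ fmap f }.

Arguments fmap {_ _} _ {_ _} _.

Unset Implicit Arguments.

Definition Fcomp {A B C : Category} (G : Functor B C) (F : Functor A B) : Functor A C.
Proof.
  refine {| fobj := fun a => G (F a); fmap := fun a b f => fmap G (fmap F f) |}.
  - intros a. rewrite !fmap_id. reflexivity.
  - intros a b c g f. rewrite !fmap_comp. reflexivity.
Defined.

Definition Fid (A : Category) : Functor A A.
Proof.
  refine {| fobj := fun a => a; fmap := fun a b f => f |}; reflexivity.
Defined.

Definition is_natural {A B : Category} (F G : Functor A B)
  (alpha : forall a : A, Hom (F a) (G a)) : Prop :=
  forall (a b : A) (f : Hom a b), fmap G f ∘ alpha a = alpha b ∘ fmap F f.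

Definition is_inverse {A B : Category} (F G : Functor A B)
  (alpha : forall a : A, Hom (F a) (G a)) (beta : forall a : A, Hom (G a) (F a)) : Prop :=
  forall a, beta a ∘ alpha a = idm (F a) /\ alpha a ∘ beta a = idm (G a).

Definition is_natural_iso {A B : Category} (F G : Functor A B)
  (alpha : forall a : A, Hom (F a) (G a)) : Prop :=
  is_natural F G alpha /\
  forall a, exists b : Hom (G a) (F a), b ∘ alpha a = idm (F a) /\ alpha a ∘ b = idm (G a).

Definition is_adjunction {A B : Category} (F : Functor A B) (U : Functor B A)
  (eta : forall a : A, Hom a (U (F a))) (eps : forall b : B, Hom (F (U b)) b) : Prop :=
  is_natural (Fid A) (Fcomp U F) eta /\
  is_natural (Fcomp F U) (Fid B) eps /\
  (forall a : A, eps (F a) ∘ fmap F (eta a) = idm (F a)) /\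
  (forall b : B, fmap U (eps b) ∘ eta (U b) = idm (U b)).

Definition is_comonad {A : Category} (D : Functor A A)
  (Delta : forall a : A, Hom (D a) (D (D a))) (epsD : forall a : A, Hom (D a) a) : Prop :=
  is_natural D (Fcomp D D) Delta /\
  is_natural D (Fid A) epsD /\
  (forall a, fmap D (Delta a) ∘ Delta a = Delta (D a) ∘ Delta a) /\
  (forall a, epsD (D a) ∘ Delta a = idm (D a)) /\
  (forall a, fmap D (epsD a) ∘ Delta a = idm (D a)).

Definition lax_morphism {A' B' : Category}
  (C' : Functor A' A') (DeltaC : forall a, Hom (C' a) (C' (C' a))) (epsC : forall a, Hom (C' a) a)
  (D : Functor B' B') (DeltaD : forall b, Hom (D b) (D (D b))) (epsD : forall b, Hom (D b) b)
  (G : Functor B' A') (sigma : forall b : B', Hom (C' (G b)) (G (D b))) : Prop :=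
  is_natural (Fcomp C' G) (Fcomp G D) sigma /\
  (forall b, fmap G (DeltaD b) ∘ sigma b
             = sigma (D b) ∘ fmap C' (sigma b) ∘ DeltaC (G b)) /\
  (forall b, fmap G (epsD b) ∘ sigma b = epsC (G b)).

Definition colax_morphism {A' B' : Category}
  (C' : Functor A' A') (DeltaC : forall a, Hom (C' a) (C' (C' a))) (epsC : forall a, Hom (C' a) a)
  (D : Functor B' B') (DeltaD : forall b, Hom (D b) (D (D b))) (epsD : forall b, Hom (D b) b)
  (F : Functor A' B') (tau : forall a : A', Hom (F (C' a)) (D (F a))) : Prop :=
  is_natural (Fcomp F C') (Fcomp D F) tau /\
  (forall a, DeltaD (F a) ∘ tau a
             = fmap D (tau a) ∘ tau (C' a) ∘ fmap F (DeltaC a)) /\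
  (forall a, epsD (F a) ∘ tau a = fmap F (epsC a)).

(* Comonad induced by an adjunction F -| U on the codomain of F:
   (FU, F eta U, eps) *)
Definition ind_Delta {A B : Category} (F : Functor A B) (U : Functor B A)
  (eta : forall a : A, Hom a (U (F a))) (b : B)
  : Hom (Fcomp F U b) (Fcomp F U (Fcomp F U b)) :=
  fmap F (eta (U b)).

Definition mate {Cc B : Category} (V : Functor Cc B) (G : Functor B Cc)
  (eta' : forall c : Cc, Hom c (G (V c))) (eps' : forall b : B, Hom (V (G b)) b)
  (Q : Functor Cc Cc) (T : Functor B B)
  (Omt : forall b : B, Hom (Q (G b)) (G (T b))) (c : Cc) : Hom (V (Q c)) (T (V c)) :=
  eps' (T (V c)) ∘ fmap V (Omt (V c)) ∘ fmap V (fmap Q (eta' c)).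

Definition psi_law {Cc B : Category} (V : Functor Cc B) (G : Functor B Cc)
  (Q : Functor Cc Cc) (T : Functor B B)
  (Lam : forall c : Cc, Hom (V (Q c)) (T (V c)))
  (Omtinv : forall b : B, Hom (G (T b)) (Q (G b))) (b : B)
  : Hom (Fcomp V G (T b)) (T (Fcomp V G b)) :=
  Lam (G b) ∘ fmap V (Omtinv b).

Definition is_left_coalg {B Z : Category}
  (T : Functor B B) (DeltaT : forall b, Hom (T b) (T (T b))) (epsT : forall b, Hom (T b) b)
  (S : Functor B B) (DeltaS : forall b, Hom (S b) (S (S b))) (epsS : forall b, Hom (S b) b)
  (chi : forall b, Hom (T (S b)) (S (T b)))
  (N : Functor B Z) (lam : forall b, Hom (N (S b)) (N (T b))) : Prop :=
  is_natural (Fcomp N S) (Fcomp N T) lam /\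
  (forall b, fmap N (DeltaT b) ∘ lam b
             = lam (T b) ∘ fmap N (chi b) ∘ lam (S b) ∘ fmap N (DeltaS b)) /\
  (forall b, fmap N (epsT b) ∘ lam b = fmap N (epsS b)).

Definition is_opcoalg {Cc Z : Category}
  (Q : Functor Cc Cc) (DeltaQ : forall c, Hom (Q c) (Q (Q c))) (epsQ : forall c, Hom (Q c) c)
  (P : Functor Cc Z) (nabla : forall c, Hom (P c) (P (Q c))) : Prop :=
  is_natural P (Fcomp P Q) nabla /\
  (forall c, fmap P (DeltaQ c) ∘ nabla c = nabla (Q c) ∘ nabla c) /\
  (forall c, fmap P (epsQ c) ∘ nabla c = idm (P c)).

Definition in_bijection (X Y : Type) : Prop :=
  exists (f : X -> Y) (g : Y -> X),
    (forall x, g (f x) = x) /\ (forall y, f (g y) = y).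

(* (V, Lam) and (G, Omt) intertwine Q with T, so psi = Lam G o V Omt^-1 is a composite of
   isomorphisms.  For the bijection, transposition along V -| G identifies lam : NVG => NT
   with kappa = lam V o NV eta' : NV => NTV, and composing with N Lam^-1 gives
   nabla : NV => NVQ; backwards, nabla |-> N Omt_transpose o nabla G, where
   Omt_transpose = eps' T o V Omt is the transpose of Omt.  The colax laws of Lam
   (equivalently, the lax laws of Lam^-1) carry the coalgebra laws of lam to the
   opcoalgebra laws of nabla, the lax laws of Omt carry them back, and the two sides are
   linked by psi^-1 o Lam G = V Omt. *)

From Stdlib Require Import ClassicalEpsilon FunctionalExtensionality ProofIrrelevance.

Lemma is_natural_inverse {A B : Category} (F G : Functor A B)
  (alpha : forall a : A, Hom (F a) (G a)) (beta : forall a : A, Hom (G a) (F a)) :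
  is_natural F G alpha -> is_inverse F G alpha beta -> is_natural G F beta.
Proof.
  intros Halpha Hinv a b f.
  destruct (Hinv a) as [_ Ha]; destruct (Hinv b) as [Hb _].
  rewrite <- (comp_id_l (fmap F f ∘ beta a)), <- Hb.
  rewrite <- !comp_assoc, (comp_assoc (alpha b)), <- Halpha, <- comp_assoc, Ha, comp_id_r.
  reflexivity.
Qed.

Lemma is_natural_iso_of_inverse {A B : Category} (F G : Functor A B)
  (alpha : forall a : A, Hom (F a) (G a)) (beta : forall a : A, Hom (G a) (F a)) :
  is_natural F G alpha -> is_inverse F G alpha beta -> is_natural_iso F G alpha.
Proof.
  intros Hnat Hinv. split; [exact Hnat |].
  intros a. exists (beta a). exact (Hinv a).
Qed.

Lemma is_inverse_choice {A B : Category} (F G : Functor A B)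
  (alpha : forall a : A, Hom (F a) (G a)) :
  (forall a, exists b : Hom (G a) (F a), b ∘ alpha a = idm (F a) /\ alpha a ∘ b = idm (G a)) ->
  exists beta, is_inverse F G alpha beta.
Proof.
  intros Hiso.
  exists (fun a => proj1_sig (constructive_indefinite_description _ (Hiso a))).
  intros a. exact (proj2_sig (constructive_indefinite_description _ (Hiso a))).
Qed.

Lemma colax_iso_inverse_lax {A' B' : Category}
  (C' : Functor A' A') (DeltaC : forall a, Hom (C' a) (C' (C' a))) (epsC : forall a, Hom (C' a) a)
  (D : Functor B' B') (DeltaD : forall b, Hom (D b) (D (D b))) (epsD : forall b, Hom (D b) b)
  (F : Functor A' B') (tau : forall a, Hom (F (C' a)) (D (F a)))
  (tauinv : forall a, Hom (D (F a)) (F (C' a))) :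
  colax_morphism C' DeltaC epsC D DeltaD epsD F tau ->
  is_inverse (Fcomp F C') (Fcomp D F) tau tauinv ->
  lax_morphism D DeltaD epsD C' DeltaC epsC F tauinv.
Proof.
  intros [Hnat [HDelta Heps]] Hinv.
  split; [| split]; [exact (is_natural_inverse _ _ _ _ Hnat Hinv) | intros a | intros a].
  - destruct (Hinv a) as [Ha1 Ha2]; destruct (Hinv (C' a)) as [HCa1 _]; simpl in *.
    symmetry. rewrite <- (comp_id_r (DeltaD (F a))), <- Ha2, (comp_assoc (DeltaD (F a))), HDelta.
    rewrite <- !comp_assoc, (comp_assoc (fmap D (tauinv a))), <- fmap_comp, Ha1, fmap_id, comp_id_l.
    rewrite comp_assoc, HCa1, comp_id_l. reflexivity.
  - destruct (Hinv a) as [_ Ha2]; simpl in *.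
    rewrite <- Heps, <- comp_assoc, Ha2, comp_id_r. reflexivity.
Qed.

Lemma in_bijection_sig {X Y : Type} (P : X -> Prop) (R : Y -> Prop) (f : X -> Y) (g : Y -> X) :
  (forall x, P x -> R (f x)) -> (forall y, R y -> P (g y)) ->
  (forall x, P x -> g (f x) = x) -> (forall y, R y -> f (g y) = y) ->
  in_bijection {x | P x} {y | R y}.
Proof.
  intros HPR HRP Hgf Hfg.
  exists (fun x => exist R (f (proj1_sig x)) (HPR _ (proj2_sig x))).
  exists (fun y => exist P (g (proj1_sig y)) (HRP _ (proj2_sig y))).
  split; [intros [x Hx] | intros [y Hy]];
    (apply eq_sig_hprop; [intros; apply proof_irrelevance | simpl; auto]).
Qed.

Section ExtensionThroughAdjunction.

Variables (B Cc : Category) (V : Functor Cc B) (G : Functor B Cc).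
Variables (eta' : forall c : Cc, Hom c (G (V c))) (eps' : forall b : B, Hom (V (G b)) b).
Hypothesis HVG : is_adjunction V G eta' eps'.

Let eta'_nat a b (f : Hom a b) : fmap G (fmap V f) ∘ eta' a = eta' b ∘ f.
Proof. exact (proj1 HVG a b f). Qed.
Let eps'_nat a b (f : Hom a b) : f ∘ eps' a = eps' b ∘ fmap V (fmap G f).
Proof. exact (proj1 (proj2 HVG) a b f). Qed.
Let triangle_V c : eps' (V c) ∘ fmap V (eta' c) = idm (V c).
Proof. exact (proj1 (proj2 (proj2 HVG)) c). Qed.
Let triangle_G b : fmap G (eps' b) ∘ eta' (G b) = idm (G b).
Proof. exact (proj2 (proj2 (proj2 HVG)) b). Qed.

Variables (T : Functor B B) (DeltaT : forall b, Hom (T b) (T (T b))) (epsT : forall b, Hom (T b) b).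
Variables (Q : Functor Cc Cc) (DeltaQ : forall c, Hom (Q c) (Q (Q c)))
  (epsQ : forall c, Hom (Q c) c).

Variables (Omt : forall b, Hom (Q (G b)) (G (T b))) (Omtinv : forall b, Hom (G (T b)) (Q (G b))).
Hypothesis HOmt_inv : is_inverse (Fcomp Q G) (Fcomp G T) Omt Omtinv.
Hypothesis HOmt_lax : lax_morphism Q DeltaQ epsQ T DeltaT epsT G Omt.

Let Omt_nat a b (f : Hom a b) : fmap G (fmap T f) ∘ Omt a = Omt b ∘ fmap Q (fmap G f).
Proof. exact (proj1 HOmt_lax a b f). Qed.

Let Lam := mate V G eta' eps' Q T Omt.
Variable Laminv : forall c, Hom (T (V c)) (V (Q c)).
Hypothesis HLam_colax : colax_morphism Q DeltaQ epsQ T DeltaT epsT V Lam.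
Hypothesis HLam_inv : is_inverse (Fcomp V Q) (Fcomp T V) Lam Laminv.

Let Lam_nat a b (f : Hom a b) : fmap T (fmap V f) ∘ Lam a = Lam b ∘ fmap V (fmap Q f).
Proof. exact (proj1 HLam_colax a b f). Qed.
Let Laminv_nat a b (f : Hom a b) : fmap V (fmap Q f) ∘ Laminv a = Laminv b ∘ fmap T (fmap V f).
Proof. exact (is_natural_inverse _ _ _ _ (proj1 HLam_colax) HLam_inv a b f). Qed.
Let Laminv_Delta c :
  fmap V (DeltaQ c) ∘ Laminv c = Laminv (Q c) ∘ fmap T (Laminv c) ∘ DeltaT (V c).
Proof. exact (proj1 (proj2 (colax_iso_inverse_lax _ _ _ _ _ _ _ _ _ HLam_colax HLam_inv)) c). Qed.
Let Laminv_eps c : fmap V (epsQ c) ∘ Laminv c = epsT (V c).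
Proof. exact (proj2 (proj2 (colax_iso_inverse_lax _ _ _ _ _ _ _ _ _ HLam_colax HLam_inv)) c). Qed.

Let psi := psi_law V G Q T Lam Omtinv.

Definition Omt_transpose b : Hom (V (Q (G b))) (T b) := eps' (T b) ∘ fmap V (Omt b).

Lemma Omt_transpose_natural a b (f : Hom a b) :
  fmap T f ∘ Omt_transpose a = Omt_transpose b ∘ fmap V (fmap Q (fmap G f)).
Proof.
  unfold Omt_transpose.
  rewrite comp_assoc, eps'_nat, <- !comp_assoc, <- !fmap_comp, Omt_nat. reflexivity.
Qed.

Lemma Omt_transpose_eps b : epsT b ∘ Omt_transpose b = eps' b ∘ fmap V (epsQ (G b)).
Proof.
  unfold Omt_transpose.
  rewrite comp_assoc, eps'_nat, <- comp_assoc, <- fmap_comp, (proj2 (proj2 HOmt_lax)).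
  reflexivity.
Qed.

Lemma Omt_transpose_Delta b :
  DeltaT b ∘ Omt_transpose b
  = Omt_transpose (T b) ∘ fmap V (fmap Q (Omt b)) ∘ fmap V (DeltaQ (G b)).
Proof.
  unfold Omt_transpose.
  rewrite comp_assoc, eps'_nat, <- !comp_assoc, <- !fmap_comp, (proj1 (proj2 HOmt_lax)).
  rewrite !comp_assoc. reflexivity.
Qed.

Lemma mateE c : Lam c = Omt_transpose (V c) ∘ fmap V (fmap Q (eta' c)).
Proof. reflexivity. Qed.

Lemma Omt_transpose_mate b : Omt_transpose b = fmap T (eps' b) ∘ Lam (G b).
Proof.
  unfold Lam, mate, Omt_transpose.
  rewrite !comp_assoc, eps'_nat, <- !comp_assoc. f_equal.
  rewrite <- !fmap_comp. f_equal.
  rewrite comp_assoc, Omt_nat, <- comp_assoc, <- fmap_comp, triangle_G, fmap_id, comp_id_r.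
  reflexivity.
Qed.

Lemma mate_eta c : fmap G (Lam c) ∘ eta' (Q c) = Omt (V c) ∘ fmap Q (eta' c).
Proof.
  unfold Lam, mate.
  rewrite !fmap_comp, <- !comp_assoc, eta'_nat.
  rewrite (comp_assoc (fmap G (fmap V (Omt (V c))))), eta'_nat.
  rewrite !comp_assoc, triangle_G, comp_id_l. reflexivity.
Qed.

Lemma Omtinv_natural : is_natural (Fcomp G T) (Fcomp Q G) Omtinv.
Proof. exact (is_natural_inverse _ _ _ _ (proj1 HOmt_lax) HOmt_inv). Qed.

Lemma psi_natural : is_natural (Fcomp (Fcomp V G) T) (Fcomp T (Fcomp V G)) psi.
Proof.
  intros a b f. unfold psi, psi_law; simpl.
  rewrite comp_assoc, Lam_nat, <- !comp_assoc, <- !fmap_comp.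
  do 2 f_equal. exact (Omtinv_natural a b f).
Qed.

Lemma psi_inverse :
  is_inverse (Fcomp (Fcomp V G) T) (Fcomp T (Fcomp V G)) psi
    (fun b => fmap V (Omt b) ∘ Laminv (G b)).
Proof.
  intros b. unfold psi, psi_law; simpl.
  destruct (HLam_inv (G b)) as [HL1 HL2]; destruct (HOmt_inv b) as [HO1 HO2]; simpl in *.
  split.
  - rewrite <- comp_assoc, (comp_assoc (Laminv (G b))), HL1, comp_id_l, <- fmap_comp, HO2, fmap_id.
    reflexivity.
  - rewrite <- comp_assoc, (comp_assoc (fmap V (Omtinv b))), <- fmap_comp, HO1, fmap_id.
    rewrite comp_id_l, HL2.
    reflexivity.
Qed.

Lemma psi_natural_iso : is_natural_iso (Fcomp (Fcomp V G) T) (Fcomp T (Fcomp V G)) psi.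
Proof. exact (is_natural_iso_of_inverse _ _ _ _ psi_natural psi_inverse). Qed.

Variables (Z : Category) (N : Functor B Z).
Variable psiinv : forall b, Hom (T (V (G b))) (V (G (T b))).
Hypothesis Hpsi : is_inverse (Fcomp (Fcomp V G) T) (Fcomp T (Fcomp V G)) psi psiinv.

Lemma psiinv_mate b : psiinv b ∘ Lam (G b) = fmap V (Omt b).
Proof.
  destruct (Hpsi b) as [Hpsi1 _]; destruct (HOmt_inv b) as [HO1 _].
  unfold psi, psi_law in Hpsi1; simpl in *.
  rewrite <- (comp_id_r (Lam (G b))), <- fmap_id, <- HO1, fmap_comp, !comp_assoc.
  rewrite <- (comp_assoc (psiinv b)), Hpsi1, comp_id_l. reflexivity.
Qed.

Lemma psiinv_eta c :
  fmap V (fmap G (Laminv c)) ∘ psiinv (V c) ∘ fmap T (fmap V (eta' c))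
  = fmap V (eta' (Q c)) ∘ Laminv c.
Proof.
  destruct (HLam_inv c) as [HL1 HL2]; simpl in *.
  rewrite <- (comp_id_r (_ ∘ psiinv (V c) ∘ _)), <- HL2, !comp_assoc.
  rewrite <- (comp_assoc _ (fmap T (fmap V (eta' c)))), Lam_nat, comp_assoc.
  rewrite <- (comp_assoc _ (psiinv (V c))), psiinv_mate, <- !fmap_comp, <- comp_assoc, <- mate_eta.
  rewrite comp_assoc, <- fmap_comp, HL1, fmap_id, comp_id_l. reflexivity.
Qed.

Definition coalg_of_opcoalg (nabla : forall c, Hom (N (V c)) (N (V (Q c)))) b
  : Hom (N (V (G b))) (N (T b)) :=
  fmap N (Omt_transpose b) ∘ nabla (G b).

Definition coalg_transpose (lam : forall b, Hom (N (V (G b))) (N (T b))) c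
  : Hom (N (V c)) (N (T (V c))) :=
  lam (V c) ∘ fmap N (fmap V (eta' c)).

Definition opcoalg_of_coalg (lam : forall b, Hom (N (V (G b))) (N (T b))) c
  : Hom (N (V c)) (N (V (Q c))) :=
  fmap N (Laminv c) ∘ coalg_transpose lam c.

Section Opcoalgebra.

Variable nabla : forall c, Hom (N (V c)) (N (V (Q c))).
Hypothesis Hnabla_nat : is_natural (Fcomp N V) (Fcomp (Fcomp N V) Q) nabla.

Let nabla_nat a b (f : Hom a b) :
  fmap N (fmap V (fmap Q f)) ∘ nabla a = nabla b ∘ fmap N (fmap V f).
Proof. exact (Hnabla_nat a b f). Qed.

Lemma coalg_of_opcoalg_natural :
  is_natural (Fcomp N (Fcomp V G)) (Fcomp N T) (coalg_of_opcoalg nabla).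
Proof.
  intros a b f; simpl; unfold coalg_of_opcoalg.
  rewrite comp_assoc, <- fmap_comp, Omt_transpose_natural, fmap_comp, <- !comp_assoc, nabla_nat.
  reflexivity.
Qed.

Lemma coalg_of_opcoalg_comp_fmap c b (k : Hom c (G b)) :
  coalg_of_opcoalg nabla b ∘ fmap N (fmap V k)
  = fmap N (Omt_transpose b ∘ fmap V (fmap Q k)) ∘ nabla c.
Proof.
  unfold coalg_of_opcoalg.
  rewrite <- comp_assoc, <- nabla_nat, comp_assoc, <- fmap_comp. reflexivity.
Qed.

Lemma coalg_of_opcoalgK c : opcoalg_of_coalg (coalg_of_opcoalg nabla) c = nabla c.
Proof.
  destruct (HLam_inv c) as [HL1 _]; simpl in HL1; unfold opcoalg_of_coalg, coalg_transpose.
  rewrite coalg_of_opcoalg_comp_fmap, <- mateE, comp_assoc, <- fmap_comp.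
  rewrite HL1, fmap_id, comp_id_l. reflexivity.
Qed.

Hypothesis Hnabla : is_opcoalg Q DeltaQ epsQ (Fcomp N V) nabla.

Let nabla_Delta c : fmap N (fmap V (DeltaQ c)) ∘ nabla c = nabla (Q c) ∘ nabla c.
Proof. exact (proj1 (proj2 Hnabla) c). Qed.
Let nabla_eps c : fmap N (fmap V (epsQ c)) ∘ nabla c = idm (N (V c)).
Proof. exact (proj2 (proj2 Hnabla) c). Qed.

Lemma coalg_of_opcoalg_Delta b :
  fmap N (DeltaT b) ∘ coalg_of_opcoalg nabla b
  = coalg_of_opcoalg nabla (T b) ∘ fmap N (psiinv b) ∘ coalg_of_opcoalg nabla (V (G b))
    ∘ fmap N (fmap V (eta' (G b))).
Proof.
  symmetry.
  rewrite <- comp_assoc, coalg_of_opcoalg_comp_fmap, <- mateE.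
  rewrite <- comp_assoc, (comp_assoc (fmap N (psiinv b))), <- fmap_comp, psiinv_mate.
  rewrite comp_assoc, coalg_of_opcoalg_comp_fmap.
  unfold coalg_of_opcoalg.
  rewrite (comp_assoc (fmap N (DeltaT b))), <- fmap_comp, Omt_transpose_Delta, !fmap_comp.
  rewrite <- !comp_assoc, nabla_Delta. reflexivity.
Qed.

Lemma coalg_of_opcoalg_eps b : fmap N (epsT b) ∘ coalg_of_opcoalg nabla b = fmap N (eps' b).
Proof.
  unfold coalg_of_opcoalg.
  rewrite comp_assoc, <- fmap_comp, Omt_transpose_eps, fmap_comp, <- comp_assoc.
  rewrite nabla_eps, comp_id_r. reflexivity.
Qed.

End Opcoalgebra.

Section LeftCoalgebra.

Variable lam : forall b, Hom (N (V (G b))) (N (T b)).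
Hypothesis Hlam_nat : is_natural (Fcomp N (Fcomp V G)) (Fcomp N T) lam.

Let lam_nat a b (f : Hom a b) : fmap N (fmap T f) ∘ lam a = lam b ∘ fmap N (fmap V (fmap G f)).
Proof. exact (Hlam_nat a b f). Qed.

Lemma coalg_transpose_natural a b (f : Hom a b) :
  fmap N (fmap T (fmap V f)) ∘ coalg_transpose lam a
  = coalg_transpose lam b ∘ fmap N (fmap V f).
Proof.
  unfold coalg_transpose.
  rewrite comp_assoc, lam_nat, <- !comp_assoc, <- !fmap_comp, eta'_nat. reflexivity.
Qed.

Lemma opcoalg_of_coalg_natural :
  is_natural (Fcomp N V) (Fcomp (Fcomp N V) Q) (opcoalg_of_coalg lam).
Proof.
  intros a b f; simpl; unfold opcoalg_of_coalg.
  rewrite comp_assoc, <- fmap_comp, Laminv_nat, fmap_comp, <- comp_assoc, coalg_transpose_natural.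
  rewrite !comp_assoc. reflexivity.
Qed.

Lemma opcoalg_of_coalgK b : coalg_of_opcoalg (opcoalg_of_coalg lam) b = lam b.
Proof.
  destruct (HLam_inv (G b)) as [_ HL2]; simpl in HL2.
  unfold coalg_of_opcoalg, opcoalg_of_coalg, coalg_transpose.
  rewrite Omt_transpose_mate, !comp_assoc, <- fmap_comp, <- (comp_assoc (fmap T (eps' b))), HL2.
  rewrite comp_id_r, lam_nat, <- comp_assoc, <- !fmap_comp, triangle_G, !fmap_id, comp_id_r.
  reflexivity.
Qed.

Hypothesis Hlam : is_left_coalg T DeltaT epsT (Fcomp V G) (ind_Delta V G eta') eps' psiinv N lam.

Let lam_Delta b :
  fmap N (DeltaT b) ∘ lam b = lam (T b) ∘ fmap N (psiinv b) ∘ coalg_transpose lam (G b).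
Proof. unfold coalg_transpose. rewrite comp_assoc. exact (proj1 (proj2 Hlam) b). Qed.
Let lam_eps b : fmap N (epsT b) ∘ lam b = fmap N (eps' b).
Proof. exact (proj2 (proj2 Hlam) b). Qed.

Lemma opcoalg_of_coalg_Delta c :
  fmap N (fmap V (DeltaQ c)) ∘ opcoalg_of_coalg lam c
  = opcoalg_of_coalg lam (Q c) ∘ opcoalg_of_coalg lam c.
Proof.
  unfold opcoalg_of_coalg.
  rewrite comp_assoc, <- fmap_comp, Laminv_Delta, !fmap_comp.
  unfold coalg_transpose at 1.
  rewrite <- !comp_assoc, (comp_assoc (fmap N (DeltaT (V c)))), lam_Delta.
  rewrite <- (comp_assoc _ (coalg_transpose lam (G (V c)))), <- coalg_transpose_natural.
  rewrite !comp_assoc, <- (comp_assoc (fmap N (Laminv (Q c)))), lam_nat.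
  unfold coalg_transpose; rewrite <- !comp_assoc; do 2 f_equal.
  rewrite !comp_assoc, <- !fmap_comp, psiinv_eta. reflexivity.
Qed.

Lemma opcoalg_of_coalg_eps c : fmap N (fmap V (epsQ c)) ∘ opcoalg_of_coalg lam c = idm (N (V c)).
Proof.
  unfold opcoalg_of_coalg, coalg_transpose.
  rewrite !comp_assoc, <- fmap_comp, Laminv_eps, lam_eps, <- fmap_comp, triangle_V, fmap_id.
  reflexivity.
Qed.

End LeftCoalgebra.

Lemma left_coalg_opcoalg_bijection :
  in_bijection
    { lam : forall b, Hom (N (Fcomp V G b)) (N (T b)) |
        is_left_coalg T DeltaT epsT (Fcomp V G) (ind_Delta V G eta') eps' psiinv N lam }
    { nabla : forall c, Hom (Fcomp N V c) (Fcomp N V (Q c)) |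
        is_opcoalg Q DeltaQ epsQ (Fcomp N V) nabla }.
Proof.
  apply (in_bijection_sig _ _ opcoalg_of_coalg coalg_of_opcoalg).
  - intros lam Hlam. pose proof (proj1 Hlam) as Hlam_nat.
    split; [| split].
    + exact (opcoalg_of_coalg_natural lam Hlam_nat).
    + exact (opcoalg_of_coalg_Delta lam Hlam_nat Hlam).
    + exact (opcoalg_of_coalg_eps lam Hlam).
  - intros nabla Hnabla. pose proof (proj1 Hnabla) as Hnabla_nat.
    split; [| split].
    + exact (coalg_of_opcoalg_natural nabla Hnabla_nat).
    + exact (coalg_of_opcoalg_Delta nabla Hnabla_nat Hnabla).
    + exact (coalg_of_opcoalg_eps nabla Hnabla).
  - intros lam Hlam. apply functional_extensionality_dep.
    exact (opcoalg_of_coalgK lam (proj1 Hlam)).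
  - intros nabla Hnabla. apply functional_extensionality_dep.
    exact (coalg_of_opcoalgK nabla (proj1 Hnabla)).
Qed.

End ExtensionThroughAdjunction.

Theorem theorem1p1
  (A B Cc : Category)
  (* adjunction F -| U, induced comonad T = (FU, F eta U, eps) on B *)
  (F : Functor A B) (U : Functor B A)
  (eta : forall a : A, Hom a (U (F a))) (eps : forall b : B, Hom (F (U b)) b)
  (HFU : is_adjunction F U eta eps)
  (* comonad C on A *)
  (Cm : Functor A A) (DeltaC : forall a : A, Hom (Cm a) (Cm (Cm a)))
  (epsC : forall a : A, Hom (Cm a) a)
  (HC : is_comonad Cm DeltaC epsC)
  (* (a) adjunction V -| G whose induced comonad on B is S = (VG, V eta' G, eps') *)
  (V : Functor Cc B) (G : Functor B Cc)
  (eta' : forall c : Cc, Hom c (G (V c))) (eps' : forall b : B, Hom (V (G b)) b)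
  (HVG : is_adjunction V G eta' eps')
  (* S is a lift of C through F -| U via the natural iso Omega : CU => US *)
  (Om : forall b : B, Hom (Cm (U b)) (U (Fcomp V G b)))
  (HOm_iso : is_natural_iso (Fcomp Cm U) (Fcomp U (Fcomp V G)) Om)
  (HOm_lax : lax_morphism Cm DeltaC epsC (Fcomp V G) (ind_Delta V G eta') eps' U Om)
  (* (b) comonad Q on Cc, extension of T through V -| G via Omega~ : QG => GT *)
  (Q : Functor Cc Cc) (DeltaQ : forall c : Cc, Hom (Q c) (Q (Q c)))
  (epsQ : forall c : Cc, Hom (Q c) c)
  (HQ : is_comonad Q DeltaQ epsQ)
  (Omt : forall b : B, Hom (Q (G b)) (G (Fcomp F U b)))
  (Omtinv : forall b : B, Hom (G (Fcomp F U b)) (Q (G b)))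
  (HOmt_inv : is_inverse (Fcomp Q G) (Fcomp G (Fcomp F U)) Omt Omtinv)
  (HOmt_lax : lax_morphism Q DeltaQ epsQ (Fcomp F U) (ind_Delta F U eta) eps G Omt)
  (* (c) the mate of Omega~ is a colax isomorphism from Q to T *)
  (HLam_colax : colax_morphism Q DeltaQ epsQ (Fcomp F U) (ind_Delta F U eta) eps V
                  (mate V G eta' eps' Q (Fcomp F U) Omt))
  (HLam_iso : forall c : Cc, exists l : Hom (Fcomp F U (V c)) (V (Q c)),
                 l ∘ mate V G eta' eps' Q (Fcomp F U) Omt c = idm (V (Q c)) /\
                 mate V G eta' eps' Q (Fcomp F U) Omt c ∘ l = idm (Fcomp F U (V c))) :
  let psi := psi_law V G Q (Fcomp F U) (mate V G eta' eps' Q (Fcomp F U) Omt) Omtinv in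
  (* (1) psi : ST => TS is a natural isomorphism *)
  is_natural_iso (Fcomp (Fcomp V G) (Fcomp F U)) (Fcomp (Fcomp F U) (Fcomp V G)) psi /\
  (* (2) left psi^{-1}-coalgebra structures on N  <->  Q-opcoalgebra structures on NV *)
  (forall (Z : Category) (N : Functor B Z)
          (psiinv : forall b : B, Hom (Fcomp F U (Fcomp V G b)) (Fcomp V G (Fcomp F U b))),
      is_inverse (Fcomp (Fcomp V G) (Fcomp F U)) (Fcomp (Fcomp F U) (Fcomp V G)) psi psiinv ->
      in_bijection
        { lam : forall b : B, Hom (N (Fcomp V G b)) (N (Fcomp F U b)) |
            is_left_coalg (Fcomp F U) (ind_Delta F U eta) eps (Fcomp V G) (ind_Delta V G eta') eps' psiinv N lam }
        { nabla : forall c : Cc, Hom (Fcomp N V c) (Fcomp N V (Q c)) |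
            is_opcoalg Q DeltaQ epsQ (Fcomp N V) nabla }).
Proof.
  intros psi.
  destruct (is_inverse_choice (Fcomp V Q) (Fcomp (Fcomp F U) V) _ HLam_iso) as [Laminv HLam_inv].
  split.
  - eapply psi_natural_iso; eassumption.
  - intros Z N psiinv Hpsi. eapply left_coalg_opcoalg_bijection; eassumption.
Qed.
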